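(* Assume $n > d_{\max}$. For all integers $k_1,\dots,k_x$ with $t_i \le k_i \le a_i$ for every $i$ and $k=\sum_{i=1}^x k_i \le n-d_{\max}$, \[ R(k_1,\dots,k_x) \le \prod_{i=1}^{x}\left(1-\left(1-\frac{k}{n-d_i}\right)^{d_i}\right)^{k_i-t_i} \le \prod_{i=1}^x\left(\frac{d_i\, k}{n-d_{\max}}\right)^{k_i-t_i}. \]
   Context: Random graph model: $V$ is a set of $n$ vertices, $B\subseteq V$ a target set with $|B|=t$, and each $v\in V$ has a prescribed out-degree $d_v$ with $1\le d_{\min}\le d_v\le d_{\max}$ (constants). For each $v$ independently, its out-neighbour set is chosen uniformly at random among all $d_v$-element subsets of $V$. Let $d_1,\dots,d_x$ be the distinct values of the $d_v$, $a_i$ the number of vertices of out-degree $d_i$, and $t_i$ the number of vertices of $B$ of out-degree $d_i$. For a set $S\subseteq V$ with $B\subseteq S$ that contains exactly $k_i$ vertices of out-degree $d_i$ for each $i$, $R(k_1,\dots,k_x)$ denotes the probability that every vertex of $S$ has a directed path to a vertex of $B$ all of whose vertices lie in $S$ (by symmetry this depends only on $k_1,\dots,k_x$). *)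

From mathcomp Require Import all_boot all_order all_algebra.
Set Implicit Arguments. Unset Strict Implicit. Unset Printing Implicit Defensive.
Import Order.TTheory GRing.Theory Num.Theory.

(* A configuration assigns to every vertex v an
   out-neighbour set f v; it is admissible iff #|f v| = d v for all v.
   The random model (independent uniform d_v-subsets) is the uniform
   distribution on admissible configurations. *)
Definition configs (n : nat) (d : 'I_n -> nat) : {set {ffun 'I_n -> {set 'I_n}}} :=
  [set f : {ffun 'I_n -> {set 'I_n}} | [forall v, #|f v| == d v]].

Definition arcS (n : nat) (f : {ffun 'I_n -> {set 'I_n}}) (S : {set 'I_n}) : rel 'I_n :=
  fun u w => [&& u \in S, w \in S & w \in f u].

Definition good (n : nat) (B S : {set 'I_n}) (f : {ffun 'I_n -> {set 'I_n}}) : bool :=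
  [forall u in S, [exists b in B, connect (arcS f S) u b]].

Definition probR (n : nat) (d : 'I_n -> nat) (B S : {set 'I_n}) : rat :=
  (#|[set f in configs d | good B S f]|)%:R / (#|configs d|)%:R.

Definition cnt (n : nat) (d : 'I_n -> nat) (A : {set 'I_n}) (j : nat) : nat :=
  #|[set v in A | d v == j]|.

Definition degvals (n : nat) (d : 'I_n -> nat) : seq nat :=
  undup [seq d v | v <- enum 'I_n].

From mathcomp Require Import all_boot all_order all_algebra.
From mathcomp Require Import zify lra.
Import Order.TTheory GRing.Theory Num.Theory.
Local Open Scope ring_scope.

(* If S is good, every vertex of S \ B has an out-neighbour in S.  The
   out-neighbour sets being independent, R is at most the product over
   v in S \ B of the probability that a uniform d_v-subset of V meets S,
   namely 1 - C(n-k, d_v) / C(n, d_v).  Comparing falling factorials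
   termwise gives C(n-k, d) / C(n, d) >= (1 - k/(n-d))^d, and Bernoulli's
   inequality bounds 1 - (1 - k/(n-d))^d by d k / (n-d) <= d k / (n-d_max). *)

Section BinomialRatio.
Variable R : realFieldType.

Lemma bernoulli_ineq (y : R) (j : nat) : y <= 1 -> 1 - j%:R * y <= (1 - y) ^+ j.
Proof.
move=> y_le1; elim: j => [|j IH]; first by rewrite expr0 mul0r subr0.
have one_sub_ge0 : 0 <= 1 - y by lra.
have j_ge0 : 0 <= j%:R :> R by [].
rewrite exprS -addn1 natrD; have := ler_wpM2l one_sub_ge0 IH; nra.
Qed.

Lemma ffact_scaled_le (n d k : nat) : (d < n)%N -> (k <= n - d)%N ->
  (1 - k%:R / (n - d)%:R : R) ^+ d * (n ^_ d)%:R <= ((n - k) ^_ d)%:R.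
Proof.
move=> dn kn; have nd0 : 0 < (n - d)%:R :> R by rewrite ltr0n; lia.
set x := 1 - _; have x0 : 0 <= x by rewrite subr_ge0 ler_pdivrMr // mul1r ler_nat.
rewrite !ffact_prod -[d in x ^+ d]card_ord -prodr_const !natr_prod -big_split /=.
apply: ler_prod => i _; rewrite mulr_ge0 ?ler0n //=.
have kin : (k + i <= n)%N by have := ltn_ord i; lia.
have -> : (n - k - i)%:R = (n - i)%:R - k%:R :> R.
  by rewrite -natrB; [congr _%:R; lia | lia].
rewrite mulrBl mul1r lerD2l lerN2 mulrAC ler_pdivlMr // ler_wpM2l ?ler0n //.
by rewrite ler_nat; have := ltn_ord i; lia.
Qed.

Lemma bin_hit_ratio_le (n d k : nat) : (d < n)%N -> (k <= n - d)%N ->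
  0 <= 1 - ('C(n - k, d)%:R : R) / 'C(n, d)%:R <= 1 - (1 - k%:R / (n - d)%:R) ^+ d.
Proof.
move=> dn kn; have C0 : 0 < 'C(n, d)%:R :> R by rewrite ltr0n bin_gt0; lia.
have f0 : 0 < d`!%:R :> R by rewrite ltr0n fact_gt0.
rewrite subr_ge0 ler_pdivrMr // mul1r ler_nat leq_bin2l ?leq_subr //=.
rewrite lerD2l lerN2 ler_pdivlMr // -(ler_pM2r f0) -mulrA -!natrM !bin_ffact.
exact: ffact_scaled_le.
Qed.

Lemma hit_ratio_le_linear {n j k dmax : nat} :
  (j <= dmax)%N -> (dmax < n)%N -> (k <= n - dmax)%N ->
  0 <= 1 - (1 - (k%:R : R) / (n - j)%:R) ^+ j <= (j * k)%:R / (n - dmax)%:R.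
Proof.
move=> jd dn kn.
have nj0 : 0 < (n - j)%:R :> R by rewrite ltr0n; lia.
have nd0 : 0 < (n - dmax)%:R :> R by rewrite ltr0n; lia.
have y0 : 0 <= k%:R / (n - j)%:R :> R by rewrite divr_ge0 ?ler0n // ltW.
have y1 : k%:R / (n - j)%:R <= 1 :> R by rewrite ler_pdivrMr // mul1r ler_nat; lia.
apply/andP; split; first by rewrite subr_ge0 exprn_ile1 //; lra.
apply: (@le_trans _ _ (j%:R * (k%:R / (n - j)%:R))).
  by have := bernoulli_ineq _ j y1; lra.
rewrite natrM -mulrA ler_wpM2l ?ler0n // ler_wpM2l ?ler0n //.
by rewrite lef_pV2 ?posrE // ler_nat; lia.
Qed.

End BinomialRatio.

Lemma card_draws_meet (T : finType) (S : {set T}) (j : nat) :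
  #|[set A : {set T} | (#|A| == j) && (A :&: S != set0)]| =
  ('C(#|T|, j) - 'C(#|T| - #|S|, j))%N.
Proof.
set draws := [set A : {set T} | #|A| == j].
set avoid := [set A : {set T} | A \subset ~: S].
have card_avoid : #|draws :&: avoid| = 'C(#|T| - #|S|, j).
  rewrite -(cardsC S) addKn -cards_draws.
  by apply: eq_card => A; rewrite !inE andbC.
rewrite -card_draws -/draws -(cardsID avoid draws) card_avoid addKn.
by apply: eq_card => A; rewrite !inE setI_eq0 disjoints_subset andbC.
Qed.

Lemma good_out_meets n (B S : {set 'I_n}) f u :
  good B S f -> u \in S :\: B -> f u :&: S != set0.
Proof.
move=> /forallP g; rewrite inE => /andP[uB uS].
have /implyP/(_ uS)/existsP[b /andP[bB /connectP[p pth lst]]] := g u.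
case: p pth lst => [|w p] /=; first by move=> _ eb; rewrite -eb bB in uB.
case/andP=> /and3P[_ wS wf] _ _.
by apply/set0Pn; exists w; rewrite inE wf wS.
Qed.

Lemma card_family_sets n (F : 'I_n -> {set {set 'I_n}}) :
  #|[set f : {ffun 'I_n -> {set 'I_n}} | [forall v, f v \in F v]]| = (\prod_v #|F v|)%N.
Proof.
transitivity #|family (fun v => mem (F v))|; last by rewrite card_family foldrE big_image.
apply: eq_card => f.
by rewrite inE; apply/forallP/familyP.
Qed.

Lemma cnt_setD n (d : 'I_n -> nat) (B S : {set 'I_n}) j : B \subset S ->
  (cnt d S j - cnt d B j)%N = cnt d (S :\: B) j.
Proof.
move=> /subsetP BS; rewrite /cnt -(cardsID B [set v in S | d v == j]).
have -> : [set v in S | d v == j] :&: B = [set v in B | d v == j].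
  apply/setP => v; rewrite !inE; case vB: (v \in B); rewrite ?andbT ?andbF //=.
  by rewrite (BS _ vB).
have -> : [set v in S | d v == j] :\: B = [set v in S :\: B | d v == j].
  by apply/setP => v; rewrite !inE andbA.
by rewrite addKn.
Qed.

Lemma prod_degvals {R : comPzSemiRingType} n (d : 'I_n -> nat) (X : {set 'I_n})
    (g : nat -> R) :
  \prod_(v in X) g (d v) = \prod_(j <- degvals d) g j ^+ cnt d X j.
Proof.
rewrite /cnt; under [RHS]eq_bigr => j _ do rewrite -prodr_const.
rewrite (exchange_big_dep (mem X)) /=; last by move=> j v _; rewrite inE => /andP[].
apply: eq_bigr => v vX.
rewrite (eq_bigl (pred1 (d v))) => [|j]; last by rewrite inE vX eq_sym.
rewrite -big_filter filter_pred1_uniq ?undup_uniq ?big_seq1 //.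
by rewrite mem_undup map_f ?mem_enum.
Qed.

Section Counting.
Variables (n : nat) (d : 'I_n -> nat) (B S : {set 'I_n}).

Lemma card_configs : #|configs d| = (\prod_v 'C(n, d v))%N.
Proof.
under eq_bigr => v _ do rewrite -[n in 'C(n, _)]card_ord -card_draws.
rewrite -card_family_sets; apply: eq_card => f; rewrite !inE.
by apply: eq_forallb => v; rewrite inE.
Qed.

Lemma card_good_le :
  (#|[set f in configs d | good B S f]| <=
   \prod_v (if v \in S :\: B then 'C(n, d v) - 'C(n - #|S|, d v) else 'C(n, d v)))%N.
Proof.
pose hits v := [set A : {set 'I_n} |
                (#|A| == d v) && ((v \in S :\: B) ==> (A :&: S != set0))].
have card_hits v : #|hits v| =
    if v \in S :\: B then ('C(n, d v) - 'C(n - #|S|, d v))%N else 'C(n, d v).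
  case: ifP => vSB.
    have := card_draws_meet _ S (d v); rewrite card_ord => <-.
    by case/setDP: vSB => vS vB; apply: eq_card => A; rewrite !inE vS vB.
  rewrite -[n in 'C(n, _)]card_ord -card_draws.
  by apply: eq_card => A; move: vSB; rewrite !inE => ->; rewrite andbT.
under eq_bigr => v _ do rewrite -card_hits.
rewrite -card_family_sets; apply: subset_leq_card; apply/subsetP => f.
rewrite !inE => /andP[/forallP fd fg]; apply/forallP => v.
by rewrite inE fd; apply/implyP; apply: good_out_meets.
Qed.

Lemma probR_le_prod_hit : (forall v, d v <= n)%N ->
  probR d B S <= \prod_(v in S :\: B) (1 - 'C(n - #|S|, d v)%:R / 'C(n, d v)%:R).
Proof.
move=> dn; have C0 v : 0 < 'C(n, d v)%:R :> rat by rewrite ltr0n bin_gt0.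
rewrite /probR card_configs.
apply: (@le_trans _ _ ((\prod_v (if v \in S :\: B then 'C(n, d v) - 'C(n - #|S|, d v)
                                 else 'C(n, d v)))%N%:R / (\prod_v 'C(n, d v))%N%:R)).
  by rewrite ler_wpM2r ?invr_ge0 ?ler0n // ler_nat card_good_le.
rewrite !natr_prod -prodf_div [X in _ <= X]big_mkcond le_eqVlt; apply/predU1P; left.
apply: eq_bigr => v _; case: ifP => _; last by rewrite divff ?gt_eqF.
by rewrite natrB ?leq_bin2l ?leq_subr // mulrBl divff ?gt_eqF.
Qed.

End Counting.

Theorem lemma1 (n : nat) (d : 'I_n -> nat) (dmin dmax : nat) (B S : {set 'I_n}) :
  (1 <= dmin)%N ->
  (forall v, dmin <= d v <= dmax)%N ->
  (dmax < n)%N ->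
  B \subset S ->
  (#|S| <= n - dmax)%N ->
  let k := #|S| in
  probR d B S <=
    \prod_(j <- degvals d)
       (1 - (1 - (k%:R : rat) / (n - j)%:R) ^+ j) ^+ (cnt d S j - cnt d B j)
  /\
  \prod_(j <- degvals d)
       (1 - (1 - (k%:R : rat) / (n - j)%:R) ^+ j) ^+ (cnt d S j - cnt d B j)
  <= \prod_(j <- degvals d) ((j * k)%:R / (n - dmax)%:R) ^+ (cnt d S j - cnt d B j).
Proof.
move=> _ d_bounds dmax_lt_n BS k_le k.
have d_le_dmax v : (d v <= dmax)%N by case/andP: (d_bounds v).
have degvals_le j : j \in degvals d -> (j <= dmax)%N.
  by rewrite mem_undup => /mapP[v _ ->].
split.
- apply: le_trans (probR_le_prod_hit _ _ _ _ _) _ => [v | ].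
    by have := d_le_dmax v; lia.
  under [X in _ <= X]eq_bigr => j _ do rewrite cnt_setD //.
  rewrite -(prod_degvals _ d (S :\: B) (fun j => 1 - (1 - (k%:R : rat) / (n - j)%:R) ^+ j)).
  apply: ler_prod => v _; apply: bin_hit_ratio_le; have := d_le_dmax v; lia.
- rewrite big_seq [X in _ <= X]big_seq; apply: ler_prod => j /degvals_le j_le.
  have /andP[hit_ge0 hit_le] := hit_ratio_le_linear rat j_le dmax_lt_n k_le.
  by rewrite exprn_ge0 // lerXn2r // nnegrE (le_trans hit_ge0).
Qed.
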